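(* Let $v\in C(S^1,(0,\infty))$ be separable in $S^1$ and suppose $\max_{S^1}v>\min_{S^1}v$. Then there exist $\alpha_0\in[0,2\pi)$ and $\theta_1,\theta_2\in[0,\pi)$ such that: (i) $\theta_1+\theta_2<\pi$; (ii) $v^{-1}(\max_{S^1}v)=\{(\cos(\alpha_0+\theta),\sin(\alpha_0+\theta)):|\theta|\le\theta_1\}$ and $v^{-1}(\min_{S^1}v)=\{(\cos(\alpha_0+\pi+\theta),\sin(\alpha_0+\pi+\theta)):|\theta|\le\theta_2\}$; (iii) $v(x)=v(l_{\alpha_0}(x))$ for all $x\in S^1_{\alpha_0}$; (iv) the function $\alpha\mapsto v((\cos\alpha,\sin\alpha))$ is not constant and is nonincreasing on $[\alpha_0,\alpha_0+\pi)$.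
   Context: $S^1\subset\mathbb{R}^2$ is the unit circle. For $\alpha\in\mathbb{R}$, $S^1_\alpha=\{(\cos(\alpha+\theta),\sin(\alpha+\theta)):\theta\in(0,\pi)\}$ (an open half-circle), and for $x\in S^1$, $l_\alpha(x)$ denotes the reflection of $x$ across the line through the origin with direction $(\cos\alpha,\sin\alpha)$. A function $v\in C(S^1,\mathbb{R})$ is called separable in $S^1$ if for every $\alpha\in[0,2\pi)$, either $v(l_\alpha(x))\ge v(x)$ for all $x\in S^1_\alpha$, or $v(l_\alpha(x))\le v(x)$ for all $x\in S^1_\alpha$. *)

From Stdlib Require Import Reals Lra.
Open Scope R_scope.

Definition on_S1 (p : R * R) : Prop := fst p ^ 2 + snd p ^ 2 = 1.

Definition cs (t : R) : R * R := (cos t, sin t).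

Definition dist2 (p q : R * R) : R :=
  sqrt ((fst p - fst q) ^ 2 + (snd p - snd q) ^ 2).

(* v in C(S^1, R): v is given on R^2 but only its restriction to S^1 matters;
   continuity is continuity of the restriction w.r.t. the induced topology. *)
Definition cont_on_S1 (v : R * R -> R) : Prop :=
  forall p, on_S1 p -> forall eps, 0 < eps -> exists delta, 0 < delta /\
    forall q, on_S1 q -> dist2 p q < delta -> Rabs (v q - v p) < eps.

Definition S1_half (alpha : R) (p : R * R) : Prop :=
  exists theta, 0 < theta < PI /\ p = cs (alpha + theta).

(* reflection across the line through 0 with direction (cos a, sin a):
   l_a(x) = 2 <x,u> u - x *)
Definition refl (a : R) (p : R * R) : R * R :=
  let d := fst p * cos a + snd p * sin a in
  (2 * d * cos a - fst p, 2 * d * sin a - snd p).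

Definition separable_S1 (v : R * R -> R) : Prop :=
  forall alpha, 0 <= alpha < 2 * PI ->
    (forall x, S1_half alpha x -> v (refl alpha x) >= v x) \/
    (forall x, S1_half alpha x -> v (refl alpha x) <= v x).

Definition is_max_S1 (v : R * R -> R) (M : R) : Prop :=
  (exists p, on_S1 p /\ v p = M) /\ (forall q, on_S1 q -> v q <= M).

Definition is_min_S1 (v : R * R -> R) (m : R) : Prop :=
  (exists p, on_S1 p /\ v p = m) /\ (forall q, on_S1 q -> m <= v q).

From Stdlib Require Import Reals Lra ZArith Classical.
Open Scope R_scope.

(* Work with the 2*PI-periodic function f t := v (cos t, sin t). Separability says that at
   every b one side of b dominates the other under the reflection t |-> 2b - t.  The points
   where the right side dominates and those where the left side dominates form two closed sets
   covering R; at b and b + PI the roles are exchanged, so by connectedness some s lies in both,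
   and f is symmetric about s.  Two axes of symmetry at distance h in (0, PI) would make f
   periodic with a period at most PI, which separability forbids for a nonconstant f.  Hence on
   (s, s + PI) the same side dominates everywhere, which makes f monotone on a half circle
   starting at s or at s + PI; that point is alpha0, and the level sets of the extreme values
   are arcs centred at alpha0 and alpha0 + PI. *)

Definition periodic {T : Type} (q : R) (f : R -> T) : Prop := forall x, f (x + q) = f x.

Definition continuous_R (f : R -> R) : Prop :=
  forall t eps, 0 < eps -> exists delta, 0 < delta /\
    forall x, Rabs (x - t) < delta -> Rabs (f x - f t) < eps.

Definition closed_R (A : R -> Prop) : Prop :=
  forall s, (forall d, 0 < d -> exists x, Rabs (x - s) < d /\ A x) -> A s.

Definition reflection_ge (f : R -> R) (b : R) : Prop :=
  forall th, 0 < th < PI -> f (b + th) <= f (b - th).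

Definition reflection_le (f : R -> R) (b : R) : Prop :=
  forall th, 0 < th < PI -> f (b - th) <= f (b + th).

Definition symmetric_about (f : R -> R) (b : R) : Prop := forall th, f (b + th) = f (b - th).

Definition peak_axis (f : R -> R) (al : R) : Prop :=
  symmetric_about f al /\ forall b, al < b < al + PI -> reflection_ge f b.

Lemma periodic_Z {T : Type} (q : R) (f : R -> T) :
  periodic q f -> forall k x, f (x + q * IZR k) = f x.
Proof.
  intros Hf k; induction k as [|k IHk|k IHk] using Z.peano_ind; intros x.
  - now rewrite Rmult_0_r, Rplus_0_r.
  - rewrite succ_IZR, <- (IHk x), <- (Hf (x + q * IZR k)). f_equal; ring.
  - rewrite <- Z.sub_1_r, minus_IZR, <- (IHk x), <- (Hf (x + q * (IZR k - 1))). f_equal; ring.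
Qed.

Lemma shift_into_window (q c x : R) : 0 < q -> exists k, c <= x + q * IZR k < c + q.
Proof.
  intros Hq. set (y := (x - c) / q). destruct (archimed y) as [Hup Hup'].
  exists (1 - up y)%Z. rewrite minus_IZR.
  assert (Hy : y * q = x - c) by (unfold y; field; lra).
  assert (q * IZR (up y) > q * y) by (apply Rmult_lt_compat_l; lra).
  assert (q * (IZR (up y) - 1) <= q * y) by (apply Rmult_le_compat_l; lra).
  simpl IZR. split; nra.
Qed.

Lemma continuous_R_comp_contraction (f h : R -> R) :
  continuous_R f -> (forall x y, Rabs (h x - h y) <= Rabs (x - y)) ->
  continuous_R (fun x => f (h x)).
Proof.
  intros Hf Hh t e He. destruct (Hf (h t) e He) as [d [Hd Hfd]].
  exists d. split; [exact Hd|]. intros x Hx. apply Hfd. eapply Rle_lt_trans; eauto.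
Qed.

Lemma continuous_R_shift (f : R -> R) (c : R) : continuous_R f -> continuous_R (fun x => f (x + c)).
Proof.
  intros Hf. apply (continuous_R_comp_contraction f (fun x => x + c) Hf).
  intros x y. apply Req_le. f_equal. ring.
Qed.

Lemma continuous_R_const (c : R) : continuous_R (fun _ => c).
Proof.
  intros t e He. exists 1. split; [lra|]. intros x _. rewrite Rminus_diag, Rabs_R0. exact He.
Qed.

Lemma closed_le (g h : R -> R) : continuous_R g -> continuous_R h -> closed_R (fun b => g b <= h b).
Proof.
  intros Hg Hh s Hs. apply Rnot_lt_le. intros Hlt.
  set (e := (g s - h s) / 2).
  destruct (Hg s e) as [d1 [Hd1 Hg1]]; [unfold e; lra|].
  destruct (Hh s e) as [d2 [Hd2 Hh2]]; [unfold e; lra|].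
  destruct (Hs (Rmin d1 d2)) as [x [Hx Hle]]; [now apply Rmin_pos|].
  specialize (Hg1 x (Rlt_le_trans _ _ _ Hx (Rmin_l _ _))).
  specialize (Hh2 x (Rlt_le_trans _ _ _ Hx (Rmin_r _ _))).
  apply Rabs_def2 in Hg1, Hh2. unfold e in *. lra.
Qed.

Lemma closed_forall {I : Type} (P : I -> Prop) (A : I -> R -> Prop) :
  (forall i, closed_R (A i)) -> closed_R (fun b => forall i, P i -> A i b).
Proof.
  intros HA s Hs i Hi. apply HA. intros d Hd.
  destruct (Hs d Hd) as [x [Hx Ax]]. eauto.
Qed.

Lemma lub_adherent (E A : R -> Prop) (s : R) :
  is_lub E s -> (forall x, E x -> A x) -> closed_R A -> A s.
Proof.
  intros [Hub Hleast] HEA HA. apply HA. intros d Hd. apply NNPP. intros Hno.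
  assert (s <= s - d); [|lra].
  apply Hleast. intros x Ex. apply Rnot_lt_le. intros Hx. apply Hno.
  exists x. split; [|now apply HEA]. specialize (Hub x Ex). apply Rabs_def1; lra.
Qed.

Lemma closed_cover_meet (A B : R -> Prop) (x y : R) :
  closed_R A -> closed_R B -> x <= y -> A x -> B y ->
  (forall z, x <= z <= y -> A z \/ B z) -> exists z, x <= z <= y /\ A z /\ B z.
Proof.
  intros HA HB Hxy Ax By Hcov.
  set (E := fun z => x <= z <= y /\ A z).
  destruct (completeness E) as [s Hs].
  { exists y. intros z [Hz _]. lra. }
  { exists x. split; [lra | exact Ax]. }
  assert (Hxs : x <= s) by (apply (proj1 Hs); split; [lra | exact Ax]).
  assert (Hsy : s <= y) by (apply (proj2 Hs); intros z [Hz _]; lra).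
  exists s. split; [lra|]. split.
  - apply (lub_adherent E A s Hs); [now intros z [_ Az] | exact HA].
  - destruct (Req_dec s y) as [-> | Hne]; [exact By|].
    (* every point of (s, y] misses A, hence lies in B *)
    apply HB. intros d Hd. set (w := Rmin (s + d / 2) y).
    assert (Hw : s < w <= s + d / 2 /\ w <= y).
    { unfold w. repeat split; [apply Rmin_glb_lt; lra | apply Rmin_l | apply Rmin_r]. }
    exists w. split; [apply Rabs_def1; lra|].
    destruct (Hcov w) as [Aw | Bw]; [lra | | exact Bw].
    assert (w <= s) by (apply (proj1 Hs); split; [lra | exact Aw]). lra.
Qed.

Lemma symmetric_level_arc (g : R -> R) (c V : R) :
  continuous_R g -> symmetric_about g c -> g c = V -> g (c + PI) <> V ->
  (forall t t', 0 <= t' <= t -> t <= PI -> g (c + t) = V -> g (c + t') = V) ->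
  exists t1, 0 <= t1 < PI /\
    forall u, -PI <= u <= PI -> (g (c + u) = V <-> Rabs u <= t1).
Proof.
  intros Hg Hsym Hc Hpi Hdown. pose proof PI_RGT_0.
  set (E := fun t => 0 <= t <= PI /\ g (c + t) = V).
  destruct (completeness E) as [t1 Ht1].
  { exists PI. intros t [Ht _]. lra. }
  { exists 0. split; [lra|]. now rewrite Rplus_0_r. }
  assert (H0t1 : 0 <= t1) by (apply (proj1 Ht1); split; [lra|]; now rewrite Rplus_0_r).
  assert (Ht1PI : t1 <= PI) by (apply (proj2 Ht1); intros t [Ht _]; lra).
  assert (Hcont : continuous_R (fun t => g (c + t))).
  { apply (continuous_R_comp_contraction g (fun t => c + t) Hg).
    intros x y. apply Req_le. f_equal. ring. }
  assert (Hgt1 : g (c + t1) = V).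
  { apply Rle_antisym.
    - apply (lub_adherent E (fun t => g (c + t) <= V) t1 Ht1).
      + intros t [_ ->]. apply Rle_refl.
      + apply closed_le; [exact Hcont | apply continuous_R_const].
    - apply (lub_adherent E (fun t => V <= g (c + t)) t1 Ht1).
      + intros t [_ ->]. apply Rle_refl.
      + apply closed_le; [apply continuous_R_const | exact Hcont]. }
  assert (Hhalf : forall t, 0 <= t <= PI -> (g (c + t) = V <-> t <= t1)).
  { intros t Ht. split.
    - intros HV. now apply (proj1 Ht1).
    - intros Htt1. now apply (Hdown t1 t). }
  exists t1. split.
  { split; [exact H0t1|]. destruct (Req_dec t1 PI) as [E1 | Ne]; [|lra].
    rewrite E1 in Hgt1. contradiction. }
  intros u Hu. destruct (Rle_dec 0 u).
  - rewrite Rabs_right by lra. apply Hhalf. lra.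
  - rewrite Rabs_left by lra. rewrite Hsym. apply Hhalf. lra.
Qed.

Lemma closed_reflection_ge (f : R -> R) : continuous_R f -> closed_R (reflection_ge f).
Proof.
  intros Hf. apply (closed_forall (fun th => 0 < th < PI) (fun th b => f (b + th) <= f (b - th))).
  intros th. apply closed_le; apply continuous_R_shift, Hf.
Qed.

Lemma closed_reflection_le (f : R -> R) : continuous_R f -> closed_R (reflection_le f).
Proof.
  intros Hf. apply (closed_forall (fun th => 0 < th < PI) (fun th b => f (b - th) <= f (b + th))).
  intros th. apply closed_le; apply continuous_R_shift, Hf.
Qed.

(* Reflections about a and about a + h compose to the translation by 2h. *)
Lemma symmetric_about_twice (f : R -> R) (a h : R) :
  symmetric_about f a -> symmetric_about f (a + h) -> periodic (2 * h) f.
Proof.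
  intros Ha Hah x.
  replace (x + 2 * h) with (a + h + (x + h - a)) by ring. rewrite Hah.
  replace (a + h - (x + h - a)) with (a + (a - x)) by ring. rewrite Ha. f_equal; ring.
Qed.

Section PeriodicFunction.

Variable f : R -> R.
Hypothesis f_per : periodic (2 * PI) f.

Lemma reflection_ge_shift_PI (b : R) : reflection_le f b -> reflection_ge f (b + PI).
Proof.
  intros H th Hth.
  replace (b + PI + th) with (b - (PI - th) + 2 * PI) by ring. rewrite f_per.
  replace (b + PI - th) with (b + (PI - th)) by ring. apply H. lra.
Qed.

Lemma reflection_le_shift_PI (b : R) : reflection_ge f b -> reflection_le f (b + PI).
Proof.
  intros H th Hth.
  replace (b + PI + th) with (b - (PI - th) + 2 * PI) by ring. rewrite f_per.
  replace (b + PI - th) with (b + (PI - th)) by ring. apply H. lra.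
Qed.

Lemma symmetric_about_shift_PI (b : R) : symmetric_about f b -> symmetric_about f (b + PI).
Proof.
  intros H th.
  replace (b + PI + th) with (b + (PI + th)) by ring. rewrite H.
  replace (b + PI - th) with (b - (PI + th) + 2 * PI) by ring. now rewrite f_per.
Qed.

Lemma peak_axis_shift_Z (al : R) (k : Z) : peak_axis f al -> peak_axis f (al + 2 * PI * IZR k).
Proof.
  pose proof (periodic_Z _ f f_per k) as Hk.
  intros [Hsym Hge]. split.
  - intros th.
    replace (al + 2 * PI * IZR k + th) with (al + th + 2 * PI * IZR k) by ring.
    replace (al + 2 * PI * IZR k - th) with (al - th + 2 * PI * IZR k) by ring.
    now rewrite !Hk.
  - intros b Hb th Hth.
    replace (b + th) with (b - 2 * PI * IZR k + th + 2 * PI * IZR k) by ring.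
    replace (b - th) with (b - 2 * PI * IZR k - th + 2 * PI * IZR k) by ring.
    rewrite !Hk. apply Hge; lra.
Qed.

Lemma symmetric_of_reflections (b : R) :
  reflection_ge f b -> reflection_le f b -> symmetric_about f b.
Proof.
  intros Hge Hle th. pose proof PI_RGT_0.
  assert (Hsmall : forall t, 0 < t < PI -> f (b + t) = f (b - t)).
  { intros t Ht. apply Rle_antisym; auto. }
  destruct (shift_into_window (2 * PI) (- PI) th) as [k Hk]; [lra|].
  set (t := th + 2 * PI * IZR k) in Hk.
  pose proof (periodic_Z _ f f_per k) as Hper.
  replace (b + th) with (b + t + 2 * PI * - IZR k) by (unfold t; ring).
  replace (b - th) with (b - t + 2 * PI * IZR k) by (unfold t; ring).
  rewrite <- opp_IZR, periodic_Z, Hper by exact f_per. clearbody t.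
  destruct (Rtotal_order t 0) as [Hneg | [-> | Hpos]].
  - destruct (Req_dec t (- PI)) as [-> | Hne].
    + replace (b + - PI) with (b - PI) by ring.
      rewrite <- (f_per (b - PI)). f_equal; ring.
    + replace (b + t) with (b - - t) by ring. replace (b - t) with (b + - t) by ring.
      symmetry. apply Hsmall. lra.
  - f_equal; ring.
  - apply Hsmall. lra.
Qed.

Section PeakAxis.

Variable al : R.
Hypothesis al_peak : peak_axis f al.

Lemma peak_axis_antitone (s t : R) : al <= s -> s <= t -> t <= al + PI -> f t <= f s.
Proof.
  intros Hs Hst Ht. destruct (Rle_lt_or_eq_dec s t Hst) as [Hlt | ->]; [|apply Rle_refl].
  specialize (proj2 al_peak ((s + t) / 2) ltac:(lra) ((t - s) / 2) ltac:(split; lra)).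
  now replace ((s + t) / 2 + (t - s) / 2) with t by field;
      replace ((s + t) / 2 - (t - s) / 2) with s by field.
Qed.

Lemma peak_axis_bounds (x : R) : f (al + PI) <= f x <= f al.
Proof.
  pose proof PI_RGT_0.
  destruct (shift_into_window (2 * PI) (al - PI) x) as [k Hk]; [lra|].
  rewrite <- (periodic_Z _ f f_per k x).
  set (y := x + 2 * PI * IZR k) in *.
  replace y with (al + (y - al)) by ring.
  destruct (Rle_dec al y).
  - split; apply peak_axis_antitone; lra.
  - rewrite (proj1 al_peak (y - al)). split; apply peak_axis_antitone; lra.
Qed.

Lemma peak_axis_arcs :
  continuous_R f -> f (al + PI) < f al ->
  exists t1 t2, 0 <= t1 < PI /\ 0 <= t2 < PI /\ t1 + t2 < PI /\
    (forall u, -PI <= u <= PI -> (f (al + u) = f al <-> Rabs u <= t1)) /\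
    (forall u, -PI <= u <= PI -> (f (al + PI + u) = f (al + PI) <-> Rabs u <= t2)).
Proof.
  intros Hf Hlt. pose proof PI_RGT_0.
  destruct (symmetric_level_arc f al (f al)) as [t1 [Ht1 Harc1]];
    [exact Hf | exact (proj1 al_peak) | reflexivity | lra | |].
  { intros t t' Ht' Ht Hmax. apply Rle_antisym; [apply peak_axis_bounds|].
    rewrite <- Hmax at 1. apply peak_axis_antitone; lra. }
  destruct (symmetric_level_arc f (al + PI) (f (al + PI))) as [t2 [Ht2 Harc2]];
    [exact Hf | exact (symmetric_about_shift_PI al (proj1 al_peak)) | reflexivity | | |].
  { replace (al + PI + PI) with (al + 2 * PI) by ring. rewrite f_per. lra. }
  { intros t t' Ht' Ht Hmin.
    rewrite (symmetric_about_shift_PI al (proj1 al_peak)) in Hmin |- *.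
    apply Rle_antisym; [|apply peak_axis_bounds].
    rewrite <- Hmin. apply peak_axis_antitone; lra. }
  exists t1, t2. split; [exact Ht1|]. split; [exact Ht2|].
  split; [|split; [exact Harc1 | exact Harc2]].
  (* the point al + t1 would lie on both arcs *)
  apply Rnot_le_lt. intros Hsum.
  assert (HM : f (al + t1) = f al) by (apply Harc1; [lra | rewrite Rabs_right; lra]).
  assert (Hm : f (al + PI + (t1 - PI)) = f (al + PI)).
  { apply Harc2; [lra | rewrite Rabs_left1; lra]. }
  replace (al + PI + (t1 - PI)) with (al + t1) in Hm by ring. lra.
Qed.

End PeakAxis.

Section Separable.

Hypothesis f_sep : forall b, reflection_ge f b \/ reflection_le f b.

Lemma separable_short_period_constant (q a : R) :
  periodic q f -> 0 < q <= PI -> (forall x, f x <= f a) -> forall x, f x = f a.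
Proof.
  intros Hq Hqpos Hmax x. apply Rle_antisym; [apply Hmax|]. apply Rnot_lt_le. intros Hx.
  destruct (shift_into_window q a x) as [k Hk]; [lra|].
  rewrite <- (periodic_Z q f Hq k x) in Hx.
  set (y := x + q * IZR k) in Hk, Hx.
  assert (Hya : y <> a) by (intros E; rewrite E in Hx; lra).
  (* compare a with y, and a + q with y - q, through their midpoint *)
  set (be := (a + y) / 2). set (th := (y - a) / 2).
  destruct (f_sep be) as [Hge | Hle].
  - specialize (Hge (q - th) ltac:(unfold th; lra)).
    replace (be + (q - th)) with (a + q) in Hge by (unfold be, th; field).
    replace (be - (q - th)) with (y - q) in Hge by (unfold be, th; field).
    rewrite Hq in Hge.
    assert (f (y - q) = f y) by (rewrite <- (Hq (y - q)); f_equal; ring). lra.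
  - specialize (Hle th ltac:(unfold th; lra)).
    replace (be - th) with a in Hle by (unfold be, th; field).
    replace (be + th) with y in Hle by (unfold be, th; field). lra.
Qed.

Variables xM xm : R.
Hypothesis f_le_max : forall x, f x <= f xM.
Hypothesis f_nonconstant : f xm < f xM.

Lemma no_close_axes (s h : R) :
  symmetric_about f s -> symmetric_about f (s + h) -> 0 < h < PI -> False.
Proof.
  intros Hs Hsh Hh.
  pose proof (symmetric_about_twice f s h Hs Hsh) as H2h.
  assert (Hq : exists q, 0 < q <= PI /\ periodic q f).
  { destruct (Rle_dec (2 * h) PI).
    - exists (2 * h). split; [lra | exact H2h].
    - exists (2 * PI - 2 * h). split; [lra|]. intros x.
      rewrite <- (H2h (x + (2 * PI - 2 * h))), <- (f_per x). f_equal. ring. }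
  destruct Hq as [q [Hq Hper]].
  pose proof (separable_short_period_constant q xM Hper Hq f_le_max xm). lra.
Qed.

Hypothesis f_cont : continuous_R f.

Lemma exists_symmetry_axis : exists s, symmetric_about f s.
Proof.
  pose proof PI_RGT_0.
  assert (Hboth : exists z, reflection_ge f z /\ reflection_le f z).
  { destruct (f_sep 0) as [H0 | H0].
    - destruct (closed_cover_meet (reflection_ge f) (reflection_le f) 0 PI) as [z Hz];
        [now apply closed_reflection_ge | now apply closed_reflection_le | lra | exact H0 | | |].
      + rewrite <- (Rplus_0_l PI). now apply reflection_le_shift_PI.
      + intros z _. apply f_sep.
      + exists z. tauto.
    - destruct (closed_cover_meet (reflection_le f) (reflection_ge f) 0 PI) as [z Hz];
        [now apply closed_reflection_le | now apply closed_reflection_ge | lra | exact H0 | | |].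
      + rewrite <- (Rplus_0_l PI). now apply reflection_ge_shift_PI.
      + intros z _. apply or_comm, f_sep.
      + exists z. tauto. }
  destruct Hboth as [s [Hge Hle]]. exists s. now apply symmetric_of_reflections.
Qed.

Lemma reflection_side_constant (s : R) : symmetric_about f s ->
  (forall b, s < b < s + PI -> reflection_ge f b) \/
  (forall b, s < b < s + PI -> reflection_le f b).
Proof.
  intros Hs. apply NNPP. intros Hneither. apply not_or_and in Hneither as [Nge Nle].
  apply not_all_ex_not in Nge as [b1 Nb1]. apply imply_to_and in Nb1 as [Hb1 Nb1].
  apply not_all_ex_not in Nle as [b2 Nb2]. apply imply_to_and in Nb2 as [Hb2 Nb2].
  assert (Hle1 : reflection_le f b1) by (destruct (f_sep b1); tauto).
  assert (Hge2 : reflection_ge f b2) by (destruct (f_sep b2); tauto).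
  assert (Hz : exists z, s < z < s + PI /\ reflection_ge f z /\ reflection_le f z).
  { destruct (Rle_dec b1 b2).
    - destruct (closed_cover_meet (reflection_le f) (reflection_ge f) b1 b2)
        as [z [Hz [Hlez Hgez]]];
        [now apply closed_reflection_le | now apply closed_reflection_ge | lra | exact Hle1
        | exact Hge2 | intros z _; apply or_comm, f_sep |].
      exists z. split; [lra | tauto].
    - destruct (closed_cover_meet (reflection_ge f) (reflection_le f) b2 b1)
        as [z [Hz [Hgez Hlez]]];
        [now apply closed_reflection_ge | now apply closed_reflection_le | lra | exact Hge2
        | exact Hle1 | intros z _; apply f_sep |].
      exists z. split; [lra | tauto]. }
  destruct Hz as [z [Hz [Hgez Hlez]]].
  apply (no_close_axes s (z - s) Hs); [|lra].
  replace (s + (z - s)) with z by ring. now apply symmetric_of_reflections.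
Qed.

Lemma exists_peak_axis : exists al, 0 <= al < 2 * PI /\ peak_axis f al.
Proof.
  pose proof PI_RGT_0.
  assert (Hpeak : exists al, peak_axis f al).
  { destruct exists_symmetry_axis as [s Hs].
    destruct (reflection_side_constant s Hs) as [Hge | Hle].
    - exists s. split; assumption.
    - exists (s + PI). split; [now apply symmetric_about_shift_PI|].
      intros b Hb. replace b with (b - PI + PI) by ring.
      apply reflection_ge_shift_PI, Hle. lra. }
  destruct Hpeak as [al Hal].
  destruct (shift_into_window (2 * PI) 0 al) as [k Hk]; [lra|].
  exists (al + 2 * PI * IZR k). split; [lra | now apply peak_axis_shift_Z].
Qed.

End Separable.

End PeriodicFunction.

Lemma cs_periodic : periodic (2 * PI) cs.
Proof.
  intros x. unfold cs. rewrite cos_plus, sin_plus, cos_2PI, sin_2PI. f_equal; ring.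
Qed.

Lemma on_S1_cs (t : R) : on_S1 (cs t).
Proof. unfold on_S1, cs; simpl. pose proof (sin2_cos2 t). unfold Rsqr in *. lra. Qed.

Lemma on_S1_cs_window (p : R * R) (c : R) :
  on_S1 p -> exists t, c <= t < c + 2 * PI /\ p = cs t.
Proof.
  intros Hp.
  assert (Hparam : exists t, p = cs t).
  { destruct p as [x y]. unfold on_S1 in Hp; simpl in Hp.
    assert (Hx : -1 <= x <= 1) by (split; nra).
    assert (Hy : 1 - x² = y²) by (unfold Rsqr; lra).
    destruct (Rle_dec 0 y).
    - exists (acos x). unfold cs. rewrite cos_acos, sin_acos, Hy, sqrt_Rsqr by lra. reflexivity.
    - exists (- acos x). unfold cs.
      rewrite cos_neg, sin_neg, cos_acos, sin_acos, Hy, sqrt_Rsqr_abs, Rabs_left by lra.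
      f_equal; ring. }
  destruct Hparam as [t ->]. pose proof PI_RGT_0.
  destruct (shift_into_window (2 * PI) c t) as [k Hk]; [lra|].
  exists (t + 2 * PI * IZR k). split; [exact Hk|].
  symmetry. apply (periodic_Z _ cs cs_periodic).
Qed.

Lemma Rabs_sin_le (x : R) : Rabs (sin x) <= Rabs x.
Proof.
  assert (Hpos : forall u, 0 < u -> Rabs (sin u) <= u).
  { intros u Hu. pose proof (sin_lt_x u Hu). pose proof (SIN_bound u). pose proof PI2_1.
    apply Rabs_le. split; [|lra]. destruct (Rle_dec 1 u); [lra|].
    assert (0 < sin u) by (apply sin_gt_0; lra). lra. }
  destruct (Rtotal_order x 0) as [Hneg | [-> | Hx]].
  - rewrite (Rabs_left x), <- Rabs_Ropp, <- sin_neg by exact Hneg. apply Hpos. lra.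
  - rewrite sin_0. apply Rle_refl.
  - rewrite (Rabs_right x) by lra. now apply Hpos.
Qed.

Lemma dist2_cs (s t : R) : dist2 (cs s) (cs t) <= Rabs (s - t).
Proof.
  unfold dist2, cs; cbn [fst snd].
  assert (Hchord : (cos s - cos t) ^ 2 + (sin s - sin t) ^ 2 = 4 * (sin ((s - t) / 2))²).
  { rewrite form2, form4. pose proof (sin2_cos2 ((s + t) / 2)). unfold Rsqr in *. nra. }
  rewrite Hchord, <- sqrt_Rsqr_abs. apply sqrt_le_1_alt.
  replace (s - t) with (2 * ((s - t) / 2)) at 2 by field.
  rewrite (Rsqr_abs (sin _)), (Rsqr_abs (2 * _)), Rabs_mult, (Rabs_right 2) by lra.
  pose proof (Rabs_sin_le ((s - t) / 2)). pose proof (Rabs_pos (sin ((s - t) / 2))).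
  unfold Rsqr. nra.
Qed.

Lemma refl_cs (a th : R) : refl a (cs (a + th)) = cs (a - th).
Proof.
  unfold refl, cs; simpl.
  replace (cos (a + th) * cos a + sin (a + th) * sin a) with (cos th)
    by (rewrite <- cos_minus; f_equal; ring).
  rewrite cos_plus, cos_minus, sin_plus, sin_minus. f_equal; ring.
Qed.

Lemma continuous_R_on_S1 (v : R * R -> R) : cont_on_S1 v -> continuous_R (fun t => v (cs t)).
Proof.
  intros Hv t e He. destruct (Hv (cs t) (on_S1_cs t) e He) as [d [Hd Hvd]].
  exists d. split; [exact Hd|]. intros x Hx. apply Hvd; [apply on_S1_cs|].
  eapply Rle_lt_trans; [apply dist2_cs|]. now rewrite <- Rabs_Ropp, Ropp_minus_distr.
Qed.

Lemma separable_on_S1 (v : R * R -> R) : separable_S1 v ->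
  forall b, reflection_ge (fun t => v (cs t)) b \/ reflection_le (fun t => v (cs t)) b.
Proof.
  intros Hv b. pose proof PI_RGT_0 as HPI.
  destruct (shift_into_window (2 * PI) 0 b) as [k Hk]; [lra|].
  set (b' := b + 2 * PI * IZR k) in Hk.
  assert (Hcs : forall th, cs (b + th) = cs (b' + th) /\ cs (b - th) = cs (b' - th)).
  { intros th. unfold b'. rewrite <- (periodic_Z _ cs cs_periodic k (b + th)),
      <- (periodic_Z _ cs cs_periodic k (b - th)). split; f_equal; ring. }
  destruct (Hv b' ltac:(lra)) as [H | H]; [left | right]; intros th Hth;
    destruct (Hcs th) as [-> ->]; rewrite <- refl_cs.
  - apply Rge_le, H. exists th. split; [exact Hth | reflexivity].
  - apply H. exists th. split; [exact Hth | reflexivity].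
Qed.

Lemma S1_arc (v : R * R -> R) (c t1 V : R) : t1 < PI ->
  (forall u, -PI <= u <= PI -> (v (cs (c + u)) = V <-> Rabs u <= t1)) ->
  forall p, on_S1 p -> (v p = V <-> exists th, Rabs th <= t1 /\ p = cs (c + th)).
Proof.
  intros Ht1 Harc p Hp.
  destruct (on_S1_cs_window p (c - PI) Hp) as [t [Ht ->]].
  replace t with (c + (t - c)) by ring. split.
  - intros HV. exists (t - c). split; [apply Harc; [lra | exact HV] | reflexivity].
  - intros [th [Hth ->]]. apply Harc; [|exact Hth].
    pose proof (Rle_abs th). pose proof (Rle_abs (- th)). rewrite Rabs_Ropp in *. lra.
Qed.

Theorem lemma2p1 (v : R * R -> R) (M m : R) :
  cont_on_S1 v ->
  (forall p, on_S1 p -> 0 < v p) ->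
  separable_S1 v ->
  is_max_S1 v M -> is_min_S1 v m -> m < M ->
  exists alpha0 theta1 theta2 : R,
    0 <= alpha0 < 2 * PI /\ 0 <= theta1 < PI /\ 0 <= theta2 < PI /\
    (* (i) *)
    theta1 + theta2 < PI /\
    (* (ii) *)
    (forall p, on_S1 p ->
       (v p = M <-> exists theta, Rabs theta <= theta1 /\ p = cs (alpha0 + theta))) /\
    (forall p, on_S1 p ->
       (v p = m <-> exists theta, Rabs theta <= theta2 /\ p = cs (alpha0 + PI + theta))) /\
    (* (iii) *)
    (forall x, S1_half alpha0 x -> v x = v (refl alpha0 x)) /\
    (* (iv) *)
    (exists a b, v (cs a) <> v (cs b)) /\
    (forall a b, alpha0 <= a -> a <= b -> b < alpha0 + PI -> v (cs b) <= v (cs a)).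
Proof.
  intros Hcont _ Hsep [[pM [HpM HvM]] HM] [[pm [Hpm Hvm]] Hm] Hmm.
  set (f := fun t => v (cs t)).
  assert (f_per : periodic (2 * PI) f) by (intros x; unfold f; now rewrite cs_periodic).
  destruct (on_S1_cs_window pM 0 HpM) as [a [_ ->]].
  destruct (on_S1_cs_window pm 0 Hpm) as [b [_ ->]].
  destruct (exists_peak_axis f f_per (separable_on_S1 v Hsep) a b) as [al [Hal Hpeak]];
    [intros x; unfold f; rewrite HvM; apply HM, on_S1_cs | unfold f; lra
    | apply continuous_R_on_S1, Hcont |].
  assert (Hmax : f al = M).
  { apply Rle_antisym; [apply HM, on_S1_cs|].
    rewrite <- HvM. apply (peak_axis_bounds f f_per al Hpeak). }
  assert (Hmin : f (al + PI) = m).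
  { apply Rle_antisym; [|apply Hm, on_S1_cs].
    rewrite <- Hvm. apply (peak_axis_bounds f f_per al Hpeak). }
  destruct (peak_axis_arcs f f_per al Hpeak (continuous_R_on_S1 v Hcont))
    as [t1 [t2 [Ht1 [Ht2 [Hsum [Harc1 Harc2]]]]]]; [lra|].
  rewrite Hmax in Harc1. rewrite Hmin in Harc2.
  exists al, t1, t2. do 4 (split; [lra|]).
  split; [apply S1_arc; [lra | exact Harc1]|].
  split; [apply S1_arc; [lra | exact Harc2]|].
  split; [|split].
  - intros x [th [Hth ->]]. rewrite refl_cs. apply (proj1 Hpeak).
  - exists al, (al + PI). change (f al <> f (al + PI)). lra.
  - intros a' b' Ha' Hab Hb'. apply (peak_axis_antitone f al Hpeak); lra.
Qed.
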